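(* Let $G=(V,E)$ be an atomic bispanning graph, $v\in V$ of degree $3$ with neighbours $x,y,z$ and incident edges $e_x,e_y,e_z$, let $(a,b)\in\{(x,y),(x,z),(y,z)\}$, $c$ the remaining neighbour, and $G_{a,b}$ the reduction graph. Let $(e,f,S,T)$ be an arc of $\vec\tau_3(G_{a,b})$ with $e\neq e_{a,b}$ and $f\neq e_{a,b}$. If (1) $e_{a,b}\in S$ and $e\notin D_{G_{a,b}}(S,e_{a,b})\cap C_G(T+e_c,e_a)\cap C_G(T+e_c,e_b)$, or (2) $e_{a,b}\in T$ and $e\notin D_{G_{a,b}}(T,e_{a,b})\cap C_G(S+e_c,e_a)\cap C_G(S+e_c,e_b)$, then $(e,f,\rho_{e_{a,b},c}(S,T))$ is an arc of $\vec\tau_3(G)$. Conversely, for all $(S,T)\in V_{\tau(G_{a,b})}$ and all edges $e,f\neq e_{a,b}$: if $(e,f,S,T)$ is not an arc of $\vec\tau_3(G_{a,b})$, or if it is an arc but neither condition (1) nor condition (2) holds, then $(e,f,\rho_{e_{a,b},c}(S,T))$ is not an arc of $\vec\tau_3(G)$.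
   Context: Graphs are finite, undirected, possibly with parallel edges, no loops; $X+a=X\cup\{a\}$, $X-a=X\setminus\{a\}$. A spanning tree is $T\subseteq E$ with $(V,T)$ connected and acyclic; bispanning means $E$ is the union of two disjoint spanning trees; atomic means the only bispanning subgraphs are the graph itself and single vertices. For a spanning tree $T$ of a graph $H$ and $e\notin T$, $C_H(T,e)$ is the edge set of the unique cycle in $T+e$; for $e\in T$, $D_H(T,e)$ is the set of edges of $H$ with one end in each component of $(V(H),T-e)$. For disjoint spanning trees $S,T$ covering all edges of $H$: $(e,f)$ with $e\in S,f\in T$ and $D_H(S,e)\cap C_H(T,e)=\{e,f\}$ is a unique $S$ edge exchange; $(e,f)$ with $e\in T,f\in S$ and $D_H(T,e)\cap C_H(S,e)=\{e,f\}$ is a unique $T$ edge exchange. $\vec\tau_3(H)$: vertex set $V_{\tau(H)}$ of ordered pairs $(S,T)$ of disjoint spanning trees covering all edges; an arc $(e,f,S,T)$ from $(S,T)$ to $(S-e+f,T+e-f)$ for each unique $S$ edge exchange and to $(S+e-f,T-e+f)$ for each unique $T$ edge exchange; $(e,f,P)$ with $P=(S,T)$ denotes $(e,f,S,T)$. The edge $e_w$ joins $v$ and $w$. The reduction graph $G_{a,b}$ has vertex set $V-v$ and edge set $E-e_x-e_y-e_z+e_{a,b}$ with $e_{a,b}$ a new edge with ends $a,b$. $\rho_{e_{a,b},c}(S,T)=(S-e_{a,b}+e_a+e_b,T+e_c)$ if $e_{a,b}\in S$ and $=(S+e_c,T-e_{a,b}+e_a+e_b)$ if $e_{a,b}\in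 T$. *)

(* Finite multigraphs (parallel edges allowed, no loops). *)
From mathcomp Require Export all_boot.
Set Implicit Arguments. Unset Strict Implicit. Unset Printing Implicit Defensive.

Record mgraph (V E : finType) := MGraph {
  gV : {set V};
  gE : {set E};
  gs : E -> V;
  gt : E -> V }.

Section Graphs.
Variables (V E : finType).
Implicit Types (H : mgraph V E) (F C S T : {set E}) (g e f : E) (u w : V).

Definition is_graph H :=
  [&& gV H != set0,
      [forall g in gE H, (gs H g \in gV H) && (gt H g \in gV H)] &
      [forall g in gE H, gs H g != gt H g]].

Definition incident H g u := (gs H g == u) || (gt H g == u).
Definition joins H g u w :=
  ((gs H g == u) && (gt H g == w)) || ((gs H g == w) && (gt H g == u)).

Definition adjF H F : rel V := fun u w => [exists g in F, joins H g u w].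
Definition conn H F u w := connect (adjF H F) u w.

Definition is_cycle H C :=
  [&& C != set0,
      [forall u, #|[set g in C | incident H g u]| \in [:: 0; 2]] &
      [forall g in C, forall h in C, conn H C (gs H g) (gs H h)]].

Definition acyclic H F := [forall C : {set E}, (C \subset F) ==> ~~ is_cycle H C].

Definition spanning_tree H F :=
  [&& F \subset gE H,
      [forall u in gV H, forall w in gV H, conn H F u w] & acyclic H F].

(* C_H(T,e): the edge set of the (unique) cycle of T+e, written as the union
   of all cycles contained in T+e *)
Definition Cyc H F e :=
  \bigcup_(C : {set E} | (C \subset F :|: [set e]) && is_cycle H C) C.

(* D_H(T,e): edges of H with one end in each component of (V(H), T-e);
   these components are those of the two ends of e. *)
Definition Dcut H F e :=
  [set g in gE H |
     (conn H (F :\ e) (gs H e) (gs H g) && conn H (F :\ e) (gt H e) (gt H g))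
  || (conn H (F :\ e) (gs H e) (gt H g) && conn H (F :\ e) (gt H e) (gs H g))].

Definition Vtau H S T :=
  [&& spanning_tree H S, spanning_tree H T, [disjoint S & T] & S :|: T == gE H].

Definition uniqS_exch H S T e f :=
  [&& e \in S, f \in T & Dcut H S e :&: Cyc H T e == [set e; f]].
Definition uniqT_exch H S T e f :=
  [&& e \in T, f \in S & Dcut H T e :&: Cyc H S e == [set e; f]].

Definition arc H e f S T :=
  Vtau H S T && (uniqS_exch H S T e f || uniqT_exch H S T e f).
Definition arcP H e f (P : {set E} * {set E}) := arc H e f P.1 P.2.

Definition bispanning H := [exists S, exists T, Vtau H S T].

Definition atomic H :=
  bispanning H /\
  forall (V' : {set V}) (E' : {set E}),
    V' \subset gV H -> E' \subset gE H ->
    is_graph (MGraph V' E' (gs H) (gt H)) ->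
    bispanning (MGraph V' E' (gs H) (gt H)) ->
    (V' = gV H /\ E' = gE H) \/ #|V'| = 1.

Definition reduction H v ex ey ez eab :=
  MGraph (gV H :\ v) ((gE H :\: [set ex; ey; ez]) :|: [set eab]) (gs H) (gt H).

Definition rho (eab ea eb ec : E) (S T : {set E}) : {set E} * {set E} :=
  if eab \in S then ((S :\ eab) :|: [set ea; eb], T :|: [set ec])
  else (S :|: [set ec], (T :\ eab) :|: [set ea; eb]).

End Graphs.

Set Implicit Arguments. Unset Strict Implicit. Unset Printing Implicit Defensive.

(* Let e_{a,b} be in S.  Then rho replaces S by S' = S - e_{a,b} + e_a + e_b, which
   subdivides e_{a,b} by v, and T by T' = T + e_c, a pendant edge at v.  Connectivity
   in S' (resp. T') is connectivity in S (resp. T) after identifying v with a (resp. c),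
   so (S', T') is again a pair of complementary spanning trees, and the fundamental
   cycles and cuts of edges other than e_{a,b} only change by the appearance of e_a,
   e_b, e_c.  Hence S-exchanges survive.  For a T-exchange (e, f) the intersection
   D(T', e) n C(S', e) loses e_{a,b} and gains e_a (resp. e_b) when e_{a,b} is on the
   cycle of e in S + e and T - e separates c from a (resp. b).  Comparing the sides of
   a, b, c in T - e, the exchange stays unique iff e avoids
   D(S, e_{a,b}) n C(T', e_a) n C(T', e_b).  The case e_{a,b} in T is symmetric.
   Atomicity only serves to exclude a = b, i.e. parallel edges e_a, e_b. *)

Section Connectivity.
Variables (V E : finType) (K : mgraph V E).
Implicit Types (F C P : {set E}) (g h : E) (u w x y : V).

Definition loopless g := gs K g != gt K g.
Definition deg C u := #|[set g in C | incident K g u]|.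

Lemma graph_loopless g : is_graph K -> g \in gE K -> loopless g.
Proof. by case/and3P=> _ _ /forall_inP; apply. Qed.

Lemma graph_ends g : is_graph K -> g \in gE K -> gs K g \in gV K /\ gt K g \in gV K.
Proof. by case/and3P=> _ /forall_inP L _ /L/andP. Qed.

Lemma joinsP g u w :
  reflect ((gs K g = u /\ gt K g = w) \/ (gs K g = w /\ gt K g = u)) (joins K g u w).
Proof.
rewrite /joins; apply: (iffP orP).
  by case=> /andP[/eqP-> /eqP->]; [left|right].
by case=> -[-> ->]; rewrite !eqxx; [left|right].
Qed.

Lemma joinsC g u w : joins K g u w = joins K g w u.
Proof. by rewrite /joins orbC. Qed.

Lemma joins_ends g : joins K g (gs K g) (gt K g).
Proof. by rewrite /joins !eqxx. Qed.

Lemma joins_eq g u w u' w' : joins K g u w -> joins K g u' w' ->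
  (u = u' /\ w = w') \/ (u = w' /\ w = u').
Proof. by case/joinsP=> -[<- <-] /joinsP [][-> ->]; [left|right|right|left]. Qed.

Lemma incident_joins g u w x : joins K g u w -> incident K g x = (x == u) || (x == w).
Proof. by rewrite /incident => /joinsP [][-> ->]; rewrite ![_ == x]eq_sym // orbC. Qed.

Lemma adjF_sym F : symmetric (adjF K F).
Proof.
by move=> u w; apply/existsP/existsP => -[g /andP[gF j]]; exists g; rewrite gF joinsC.
Qed.

Lemma connC F u w : conn K F u w = conn K F w u.
Proof. exact: (sym_connect_sym (adjF_sym F)). Qed.

Lemma conn_edge F g u w : g \in F -> joins K g u w -> conn K F u w.
Proof. by move=> gF j; apply/connect1/existsP; exists g; rewrite gF. Qed.

Lemma conn_ends F g : g \in F -> conn K F (gs K g) (gt K g).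
Proof. by move=> gF; apply: conn_edge gF (joins_ends g). Qed.

Lemma conn_morph F F' (f : V -> V) :
  (forall g u w, g \in F -> joins K g u w -> conn K F' (f u) (f w)) ->
  forall u w, conn K F u w -> conn K F' (f u) (f w).
Proof.
move=> Hf u w /connectP[p pth ->]; elim: p u pth => [|y p IH] u /=.
  by move=> _; apply: connect0.
case/andP=> /existsP[g /andP[gF jg]] pth.
exact: connect_trans (Hf _ _ _ gF jg) (IH _ pth).
Qed.

Lemma conn_subset F F' u w : F \subset F' -> conn K F u w -> conn K F' u w.
Proof.
move=> sFF'; apply: (@conn_morph F F' id) => g u' w' gF.
exact: conn_edge (subsetP sFF' _ gF).
Qed.

Lemma conn_set0 u w : conn K set0 u w -> u = w.
Proof.
by case/connectP=> -[|y p] //= /andP[/existsP[g /andP[]]]; rewrite inE.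
Qed.

(** * Cycles and paths *)

Lemma card_set_sum (T : finType) (A : {pred T}) (P : pred T) :
  #|[set x in A | P x]| = \sum_(x in A) P x.
Proof.
rewrite -sum1dep_card big_mkcond [RHS]big_mkcond /=; apply: eq_bigr => x _.
by case: (x \in A); case: (P x).
Qed.

Lemma deg0 C u : {in C, forall h, ~~ incident K h u} -> deg C u = 0.
Proof.
move=> Hn; apply/eqP; rewrite cards_eq0; apply/eqP/setP => h; rewrite !inE.
by apply/negbTE/andP => -[hC i]; move: (Hn _ hC); rewrite i.
Qed.

Lemma degU1 C h u : h \notin C -> deg (h |: C) u = incident K h u + deg C u.
Proof.
move=> hC; rewrite /deg; case i: (incident K h u).
  have ->: [set g in h |: C | incident K g u] = h |: [set g in C | incident K g u].
    by apply/setP => g; rewrite !inE; case: (eqVneq g h) => [->|] /=; rewrite ?i.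
  by rewrite cardsU1 inE (negbTE hC).
have ->: [set g in h |: C | incident K g u] = [set g in C | incident K g u].
  apply/setP => g; rewrite !inE.
  by case: (eqVneq g h) => [->|] /=; rewrite ?i ?(negbTE hC).
by [].
Qed.

Lemma dvd2_card_ends (A : {set V}) h : loopless h -> (gs K h \in A) = (gt K h \in A) ->
  2 %| #|[set u in A | incident K h u]|.
Proof.
move=> lh sA; have [hA|hA] := boolP (gs K h \in A).
  have ->: [set u in A | incident K h u] = [set gs K h; gt K h].
    apply/setP => u; rewrite !inE /incident ![_ == u]eq_sym.
    case: (eqVneq u (gs K h)) => [->|_]; first by rewrite hA.
    by case: (eqVneq u (gt K h)) => [->|_]; rewrite -?sA ?hA ?andbF.
  by rewrite cards2 (negbTE lh).
have ->: [set u in A | incident K h u] = set0.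
  apply/setP => u; rewrite !inE /incident ![_ == u]eq_sym.
  case: (eqVneq u (gs K h)) => [->|_]; first by rewrite (negbTE hA).
  by case: (eqVneq u (gt K h)) => [->|_]; rewrite -?sA ?(negbTE hA) ?andbF.
by rewrite cards0.
Qed.

(* Parity: if [gt g] were not in the component [A] of [gs g] in [C :\ g], the
   total [C]-degree of [A] would be even, yet every edge of [C] but [g] has an
   even number of ends in [A] and [g] has one. *)
Lemma cycle_conn_setD1 C g : (forall u, deg C u \in [:: 0; 2]) -> g \in C ->
  {in C, forall h, loopless h} -> conn K (C :\ g) (gs K g) (gt K g).
Proof.
move=> degC gC lC; apply/negPn/negP => nc.
set A := [set u | conn K (C :\ g) (gs K g) u].
have sum_deg : \sum_(u in A) deg C u = \sum_(h in C) #|[set u in A | incident K h u]|.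
  rewrite /deg; under eq_bigr do rewrite card_set_sum.
  by rewrite exchange_big /=; apply: eq_bigr => h _; rewrite card_set_sum.
have even_deg : 2 %| \sum_(u in A) deg C u.
  by apply: dvdn_sum => u _; move: (degC u); rewrite !inE => /orP[] /eqP->.
have ends_g : #|[set u in A | incident K g u]| = 1.
  apply/eqP/cards1P; exists (gs K g); apply/setP => u; rewrite !inE /incident.
  case: (eqVneq u (gs K g)) => [->|_]; first by rewrite /conn connect0.
  by case: (eqVneq (gt K g) u) => [<-|]; rewrite ?(negbTE nc) ?andbF.
have even_rest : 2 %| \sum_(h in C | h != g) #|[set u in A | incident K h u]|.
  apply: dvdn_sum => h /andP[hC hg]; apply: dvd2_card_ends (lC _ hC) _.
  have hCg : h \in C :\ g by rewrite !inE hg hC.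
  rewrite !inE; apply/idP/idP => cA; apply: connect_trans cA _.
    exact: conn_ends hCg.
  by apply: (conn_edge hCg); rewrite joinsC joins_ends.
by move: even_deg; rewrite sum_deg (bigD1 g gC) /= ends_g dvdn_addl.
Qed.

Definition is_path P u w :=
  [/\ u != w, deg P u = 1, deg P w = 1,
      forall x, x != u -> x != w -> deg P x \in [:: 0; 2] &
      forall h, h \in P -> conn K P u (gs K h) /\ conn K P u (gt K h)].

Lemma conn_joins F g u w : g \in F -> joins K g u w ->
  conn K F u (gs K g) /\ conn K F u (gt K g).
Proof.
move=> gF j; have cuw := conn_edge gF j.
by case/joinsP: j => -[-> ->]; split => //; apply: connect0.
Qed.

Lemma is_path_conn P u w : is_path P u w -> conn K P u w.
Proof.
case=> _ _ /eqP/cards1P[h eh] _ Pconn.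
have : h \in [set g in P | incident K g w] by rewrite eh set11.
rewrite inE => /andP[hP]; case: (Pconn _ hP) => c1 c2.
by rewrite /incident => /orP[/eqP<-|/eqP<-].
Qed.

Lemma deg_set1 h u : deg [set h] u = incident K h u.
Proof. by rewrite -[[set h]]setU0 degU1 ?inE // deg0 ?addn0 // => g; rewrite inE. Qed.

Lemma is_path1 F h u w : h \in F -> u != w -> joins K h u w ->
  exists2 P : {set E}, P \subset F & is_path P u w /\
    (forall g x, g \in P -> incident K g x -> x \in [:: u; w]).
Proof.
move=> hF uw jh; exists [set h]; first by rewrite sub1set.
split; last by move=> g x; rewrite inE => /eqP->; rewrite (incident_joins _ jh) !inE.
split; rewrite ?deg_set1 ?(incident_joins _ jh) ?eqxx ?orbT //.
  by move=> x xu xw; rewrite deg_set1 (incident_joins _ jh) (negbTE xu) (negbTE xw).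
by move=> g; rewrite inE => /eqP->; apply: conn_joins (set11 h) jh.
Qed.

Lemma is_pathU1 P h x y w : is_path P y w -> joins K h x y -> x != y ->
  (forall g z, g \in P -> incident K g z -> z != x) ->
  is_path (h |: P) x w.
Proof.
move=> [yw dy dw dP cP] jh xy xP.
have hP : h \notin P.
  apply/negP => hP; move: (xP _ x hP).
  by rewrite (incident_joins _ jh) !eqxx => /(_ isT).
have dx : deg P x = 0.
  by apply: deg0 => g gP; apply/negP => i; move: (xP _ _ gP i); rewrite eqxx.
have wx : w != x.
  have [g gP gw] : exists2 g, g \in P & incident K g w.
    by move/eqP/cards1P: dw => [g eg]; have := set11 g; rewrite -eg inE => /andP[]; exists g.
  exact: xP gP gw.
split.
- by rewrite eq_sym.
- by rewrite degU1 // (incident_joins _ jh) eqxx dx.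
- by rewrite degU1 // (incident_joins _ jh) (negbTE wx) eq_sym (negbTE yw) dw.
- move=> z zx zw; rewrite degU1 // (incident_joins _ jh) (negbTE zx) /=.
  by case: (eqVneq z y) => [->|zy]; rewrite ?dy // add0n dP.
- move=> g; rewrite !inE => /orP[/eqP->|gP]; first by case: (conn_joins (setU11 h P) jh).
  have cxy : conn K (h |: P) x y by apply: conn_edge (setU11 h P) jh.
  case: (cP _ gP) => c1 c2; split; apply: connect_trans cxy _;
    exact: conn_subset (subsetUr _ _) _.
Qed.

Lemma uniq_path_is_path F p x : uniq (x :: p) -> path (adjF K F) x p -> p != [::] ->
  exists2 P : {set E}, P \subset F & is_path P x (last x p) /\
    (forall g z, g \in P -> incident K g z -> z \in x :: p).
Proof.
elim: p x => [|y p IH] x //= /andP[xp uq] /andP[/existsP[h /andP[hF jh]] pth] _.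
have xy : x != y by move: xp; rewrite inE negb_or => /andP[].
case: p IH uq pth xp => [|y' p] IH uq pth xp; first exact: is_path1 hF xy jh.
have [P sPF [Py inc]] := IH y uq pth isT.
have xP : forall g z, g \in P -> incident K g z -> z != x.
  by move=> g z gP i; apply: contraNneq xp => <-; apply: inc gP i.
exists (h |: P); first by rewrite subUset sub1set hF.
split; first exact: is_pathU1 Py jh xy xP.
move=> g z; rewrite in_setU1 => /orP[/eqP->|gP].
  by rewrite (incident_joins _ jh) !inE => /orP[]/eqP->; rewrite eqxx ?orbT.
by rewrite inE => /(inc _ _ gP) ->; rewrite orbT.
Qed.

Lemma conn_is_path F u w : conn K F u w -> u != w ->
  exists2 P : {set E}, P \subset F & is_path P u w.
Proof.
case/connectP=> p pth ->; case: (shortenP pth) => p' pth' uq _ ne.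
have p'n : p' != [::] by case: p' pth' uq ne => //= _ _; rewrite eqxx.
by have [P s [ps _]] := uniq_path_is_path uq pth' p'n; exists P.
Qed.

Lemma is_path_cycle P u w g : is_path P u w -> g \notin P -> joins K g u w ->
  is_cycle K (g |: P).
Proof.
move=> [uw du dw dx cc] gP j.
apply/and3P; split.
- by apply/set0Pn; exists g; rewrite setU11.
- apply/forallP => z; change (deg (g |: P) z \in [:: 0; 2]); rewrite degU1 //.
  rewrite (incident_joins _ j); case: (eqVneq z u) => [->|zu]; first by rewrite du.
  by case: (eqVneq z w) => [->|zw]; rewrite ?dw // add0n dx.
have cu : forall h, h \in g |: P -> conn K (g |: P) u (gs K h).
  move=> h; rewrite !inE => /orP[/eqP->|hP]; first by case: (conn_joins (setU11 g P) j).
  by case: (cc _ hP) => c1 _; apply: conn_subset c1; apply: subsetUr.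
apply/forallP => h1; apply/implyP => h1C; apply/forallP => h2; apply/implyP => h2C.
have c1 := cu _ h1C; rewrite connC in c1; exact: connect_trans c1 (cu _ h2C).
Qed.

(** * Forests *)

Lemma acyclic_bridge F g : acyclic K F -> g \in F -> loopless g ->
  ~~ conn K (F :\ g) (gs K g) (gt K g).
Proof.
move=> acF gF lg; apply/negP => cn.
have [P sub Pp] := conn_is_path cn lg.
have gP : g \notin P by apply/negP => /(subsetP sub); rewrite !inE eqxx.
move/forallP: acF => /(_ (g |: P)); rewrite (is_path_cycle Pp gP (joins_ends g)) implybF.
by rewrite subUset sub1set gF (subset_trans sub) // subsetDl.
Qed.

Lemma bridges_acyclic F : {in F, forall h, loopless h} ->
  {in F, forall h, ~~ conn K (F :\ h) (gs K h) (gt K h)} -> acyclic K F.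
Proof.
move=> lF bF; apply/forallP => C; apply/implyP => CF; apply/negP.
case/and3P => /set0Pn[g gC] /forallP degC _.
have gF := subsetP CF _ gC.
have := cycle_conn_setD1 (fun u => degC u) gC (fun h hC => lF _ (subsetP CF _ hC)).
by move/(conn_subset (setSD _ CF)); apply/negP; apply: bF.
Qed.

Section FundamentalCycle.
Variables (F : {set E}) (q : E).
Hypotheses (acF : acyclic K F) (qF : q \notin F)
  (lFq : {in F :|: [set q], forall h, loopless h}).

Lemma cycle_setU1 C : C \subset F :|: [set q] -> is_cycle K C -> q \in C.
Proof.
move=> CFq cyC; apply/negPn/negP => qC; move/forallP: acF => /(_ C).
rewrite cyC implybF => /negP; apply; apply/subsetP => h hC.
move: (subsetP CFq _ hC); rewrite !inE orbC; case: (eqVneq h q) => [hq|//].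
by move: qC; rewrite -hq hC.
Qed.

Lemma Cyc_sub g : g \in Cyc K F q -> g \in F :|: [set q].
Proof. by case/bigcupP => C /andP[CF _] /(subsetP CF). Qed.

(* The cycle through [g] passes through [q]; if the ends of [q] were joined in
   [F :\ g], going around the cycle would join the ends of [g] in [F :\ g]. *)
Lemma Cyc_not_conn g : g \in Cyc K F q -> g != q -> ~~ conn K (F :\ g) (gs K q) (gt K q).
Proof.
case/bigcupP => C /andP[CFq cyC] gC gq; apply/negP => cn.
have lC h : h \in C -> loopless h by move/(subsetP CFq)/lFq.
have degC : forall u, deg C u \in [:: 0; 2] by case/and3P: cyC => _ /forallP.
have gF : g \in F by move: (subsetP CFq _ gC); rewrite !inE (negbTE gq) orbF.
apply: (negP (acyclic_bridge acF gF (lC _ gC))).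
apply: (@conn_morph (C :\ g) _ id _ _ _ (cycle_conn_setD1 degC gC lC)) => h u w.
rewrite !inE => /andP[hg hC] j; case: (eqVneq h q) => [hq'|hq].
  by rewrite hq' in j; case: (joins_eq j (joins_ends q)) => -[-> ->] //; rewrite connC.
by apply: (conn_edge _ j); move: (subsetP CFq _ hC); rewrite !inE hg (negbTE hq) orbF.
Qed.

Lemma mem_Cyc g :
  g \in Cyc K F q = [&& g \in F :|: [set q], conn K F (gs K q) (gt K q) &
                       (g != q) ==> ~~ conn K (F :\ g) (gs K q) (gt K q)].
Proof.
apply/idP/and3P => [gC|[gFq cn nc]].
  split; [exact: Cyc_sub | | by apply/implyP; apply: Cyc_not_conn].
  case/bigcupP: gC => C /andP[CFq cyC] _.
  have qC := cycle_setU1 CFq cyC.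
  have degC : forall u, deg C u \in [:: 0; 2] by case/and3P: cyC => _ /forallP.
  apply: conn_subset _ (cycle_conn_setD1 degC qC (fun h hC => lFq (subsetP CFq h hC))).
  apply/subsetP => h; rewrite !inE => /andP[hq /(subsetP CFq)].
  by rewrite !inE (negbTE hq) orbF.
have lq : loopless q by apply: lFq; rewrite !inE eqxx orbT.
have [P sPF Pp] := conn_is_path cn lq.
have qP : q \notin P by apply: contra qF => /(subsetP sPF).
apply/bigcupP; exists (q |: P).
  rewrite (is_path_cycle Pp qP (joins_ends q)) andbT subUset sub1set !inE eqxx orbT /=.
  exact: subset_trans sPF (subsetUl _ _).
case: (eqVneq g q) => [->|gq]; first by rewrite setU11.
rewrite !inE /=; apply: contraTT nc => gP; rewrite gq /= negbK.
apply: conn_subset (is_path_conn Pp); apply/subsetP => h hP.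
by rewrite !inE (subsetP sPF _ hP) andbT; apply: contraNneq gP => <-; rewrite hP orbT.
Qed.

End FundamentalCycle.

(** * Fundamental cuts *)

Lemma conn_setD1_ends F p x : p \in F -> conn K F (gs K p) x ->
  conn K (F :\ p) (gs K p) x || conn K (F :\ p) (gt K p) x.
Proof.
move=> pF /connectP[s pth ->].
pose R y := conn K (F :\ p) (gs K p) y || conn K (F :\ p) (gt K p) y.
have R0 : R (gs K p) by rewrite /R /conn connect0.
suff Rpath : forall y, R y -> path (adjF K F) y s -> R (last y s) by apply: Rpath.
elim: s {pth} => [//|z s IH] y Ry /= /andP[/existsP[h /andP[hF jh]] pth].
apply: IH pth; case: (eqVneq h p) => [hp|hp].
  rewrite hp in jh; case: (joins_eq jh (joins_ends p)) => -[_ ->];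
    by rewrite /R /conn connect0 ?orbT.
have cyz : conn K (F :\ p) y z by apply: conn_edge jh; rewrite !inE hp.
by case/orP: Ry => c; rewrite /R /conn (connect_trans c cyz) ?orbT.
Qed.

Section Sides.
Variables (F : {set E}) (p : E).
Hypotheses (acF : acyclic K F) (pF : p \in F) (lp : loopless p).

Local Notation side x := (conn K (F :\ p) (gs K p) x).
Local Notation coside x := (conn K (F :\ p) (gt K p) x).

Lemma sides_disjoint x : ~~ (side x && coside x).
Proof.
apply/negP => /andP[c1 c2]; apply: (negP (acyclic_bridge acF pF lp)).
by rewrite connC in c2; apply: connect_trans c1 c2.
Qed.

Lemma side_split x y : conn K F (gs K p) x -> conn K F (gs K p) y ->
  (side x && coside y) || (side y && coside x) = (side x != side y).
Proof.
move=> cx cy.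
move: (conn_setD1_ends pF cx) (conn_setD1_ends pF cy) (sides_disjoint x) (sides_disjoint y).
by case: (side x); case: (coside x); case: (side y); case: (coside y).
Qed.

Lemma conn_setD1_side x y : conn K F (gs K p) x -> conn K F (gs K p) y ->
  conn K (F :\ p) x y = (side x == side y).
Proof.
move=> cx cy; apply/idP/eqP => [cxy|eqs].
  have cyx := cxy; rewrite connC in cyx.
  by apply/idP/idP => c; [apply: connect_trans c cxy | apply: connect_trans c cyx].
move: (conn_setD1_ends pF cx) (conn_setD1_ends pF cy) eqs.
case sx: (side x); case sy: (side y) => //= tx ty _.
  by rewrite connC in sx; apply: connect_trans sx sy.
by rewrite connC in tx; apply: connect_trans tx ty.
Qed.

End Sides.

Lemma mem_Dcut F p g : (g \in Dcut K F p) = (g \in gE K) &&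
  ((conn K (F :\ p) (gs K p) (gs K g) && conn K (F :\ p) (gt K p) (gt K g))
|| (conn K (F :\ p) (gs K p) (gt K g) && conn K (F :\ p) (gt K p) (gs K g))).
Proof. by rewrite inE. Qed.

Lemma Dcut_Cyc F p e : acyclic K F -> p \in F -> e \notin F -> e \in gE K ->
  {in F :|: [set e], forall h, loopless h} ->
  conn K F (gs K p) (gs K e) -> conn K F (gs K p) (gt K e) ->
  (e \in Dcut K F p) = (p \in Cyc K F e).
Proof.
move=> acF pF eF eK lFe cs ct.
have lp : loopless p by apply: lFe; rewrite inE pF.
have pe : p != e by apply: contraNneq eF => <-.
rewrite mem_Dcut eK (side_split acF pF lp cs ct) (mem_Cyc acF eF lFe) !inE pF pe /=.
suff -> : conn K F (gs K e) (gt K e) by rewrite (conn_setD1_side pF cs ct).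
by rewrite connC in cs; apply: connect_trans cs ct.
Qed.

Lemma VtauC S T : Vtau K S T = Vtau K T S.
Proof.
rewrite /Vtau disjoint_sym setUC.
by case: (spanning_tree K S); case: (spanning_tree K T).
Qed.

Lemma arcC e f S T : arc K e f S T = arc K e f T S.
Proof. by rewrite /arc VtauC orbC. Qed.

End Connectivity.

Lemma eq_set_except3 (T : finType) (X Y : {set T}) p q r :
  p \notin Y -> q \notin Y -> r \notin Y ->
  (X == Y) = [&& p \notin X, q \notin X, r \notin X &
     [forall g, (g != p) && (g != q) && (g != r) ==> ((g \in X) == (g \in Y))]].
Proof.
move=> pY qY rY; apply/eqP/and4P => [->|[pX qX rX /forallP XY]].
  by split => //; apply/forallP => g; rewrite eqxx implybT.
apply/setP => g; case: (eqVneq g p) => [->|gp]; first by rewrite (negbTE pX) (negbTE pY).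
case: (eqVneq g q) => [->|gq]; first by rewrite (negbTE qX) (negbTE qY).
case: (eqVneq g r) => [->|gr]; first by rewrite (negbTE rX) (negbTE rY).
by move: (XY g); rewrite gp gq gr => /eqP.
Qed.

(** * Identifying [v] with a neighbour *)

Section Collapse.
Variables (V E : finType) (K : mgraph V E) (v : V).
Implicit Types (F : {set E}) (x y : V).

Definition collapse w0 x := if x == v then w0 else x.

Lemma collapse_id w0 x : x != v -> collapse w0 x = x.
Proof. by rewrite /collapse => /negbTE->. Qed.

Lemma collapse_v w0 : collapse w0 v = w0.
Proof. by rewrite /collapse eqxx. Qed.

Lemma conn_off_v F w : {in F, forall h, ~~ incident K h v} -> conn K F v w -> w = v.
Proof.
move=> offF /connectP[[|y p] //= /andP[/existsP[h /andP[hF j]] _] _].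
by have := offF _ hF; rewrite (incident_joins _ j) eqxx.
Qed.

Lemma conn_collapse F w0 x y : conn K F w0 v ->
  conn K F (collapse w0 x) (collapse w0 y) = conn K F x y.
Proof.
move=> cw0; have cx z : conn K F z (collapse w0 z).
  by rewrite /collapse; case: (eqVneq z v) => [->|_]; [rewrite connC | apply: connect0].
have cx' z : conn K F (collapse w0 z) z by rewrite connC.
apply/idP/idP => cn; first exact: connect_trans (connect_trans (cx x) cn) (cx' y).
exact: connect_trans (connect_trans (cx' x) cn) (cx y).
Qed.

Lemma conn_pendant F p w0 x y : {in F, forall h, ~~ incident K h v} ->
  joins K p v w0 -> w0 != v ->
  conn K (F :|: [set p]) x y = conn K F (collapse w0 x) (collapse w0 y).
Proof.
move=> offF jp w0v; apply/idP/idP; last first.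
  move=> cn; rewrite -(@conn_collapse (F :|: [set p]) w0).
    exact: conn_subset (subsetUl _ _) cn.
  by apply: (@conn_edge _ _ _ _ p); rewrite 1?joinsC // !inE eqxx orbT.
apply: conn_morph => h u w; rewrite !inE => /orP[hF|/eqP->] j.
  have := offF _ hF; rewrite (incident_joins _ j) negb_or => /andP[vu vw].
  by rewrite !collapse_id 1?eq_sym //; apply: conn_edge hF j.
by case: (joins_eq j jp) => -[-> ->]; rewrite collapse_v collapse_id //; apply: connect0.
Qed.

Lemma conn_subdivide F q pa pb a b x y : {in F, forall h, ~~ incident K h v} ->
  q \in F -> joins K q a b -> joins K pa v a -> joins K pb v b -> a != v -> b != v ->
  conn K ((F :\ q) :|: [set pa; pb]) x y = conn K F (collapse a x) (collapse a y).
Proof.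
move=> offF qF jq ja jb av bv; set F' := _ :|: _.
have cav : conn K F' a v by apply: (@conn_edge _ _ _ _ pa); rewrite 1?joinsC // !inE eqxx orbT.
have cvb : conn K F' v b by apply: (@conn_edge _ _ _ _ pb) jb; rewrite !inE eqxx !orbT.
apply/idP/idP.
  apply: conn_morph => h u w; rewrite !inE => /orP[/andP[hq hF]|/orP[]/eqP->] j.
  - have := offF _ hF; rewrite (incident_joins _ j) negb_or => /andP[vu vw].
    by rewrite !collapse_id 1?eq_sym //; apply: conn_edge hF j.
  - by case: (joins_eq j ja) => -[-> ->]; rewrite collapse_v collapse_id //; apply: connect0.
  - case: (joins_eq j jb) => -[-> ->]; rewrite collapse_v collapse_id //;
      [exact: conn_edge qF jq | rewrite connC; exact: conn_edge qF jq].
rewrite -(conn_collapse _ _ cav); apply: (@conn_morph _ _ K F F' id) => h u w hF j.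
case: (eqVneq h q) => [hq|hq].
  rewrite hq in j; case: (joins_eq j jq) => -[-> ->];
    [exact: connect_trans cav cvb | rewrite connC; exact: connect_trans cav cvb].
by apply: conn_edge j; rewrite !inE hq hF.
Qed.

Lemma conn_pendant_off F p w0 x y : {in F, forall h, ~~ incident K h v} ->
  joins K p v w0 -> w0 != v -> x != v -> y != v ->
  conn K (F :|: [set p]) x y = conn K F x y.
Proof. by move=> offF jp w0v xv yv; rewrite (conn_pendant x y offF jp w0v) !collapse_id. Qed.

Lemma conn_subdivide_off F q pa pb a b x y : {in F, forall h, ~~ incident K h v} ->
  q \in F -> joins K q a b -> joins K pa v a -> joins K pb v b -> a != v -> b != v ->
  x != v -> y != v -> conn K ((F :\ q) :|: [set pa; pb]) x y = conn K F x y.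
Proof.
move=> offF qF jq ja jb av bv xv yv.
by rewrite (conn_subdivide x y offF qF jq ja jb av bv) !collapse_id.
Qed.

End Collapse.

(** * Atomic graphs *)

Section Digon.
Variables (V E : finType) (G : mgraph V E) (v w : V) (p q : E).
Hypotheses (v_w : v != w) (jp : joins G p v w) (jq : joins G q v w) (p_q : p != q).

Local Notation D := (MGraph [set v; w] [set p; q] (gs G) (gt G)).

Lemma digon_joins g : g \in [set p; q] -> joins G g v w.
Proof. by rewrite !inE => /orP[]/eqP->. Qed.

Lemma digon_graph : is_graph D.
Proof.
apply/and3P; split; first by apply/set0Pn; exists v; rewrite !inE eqxx.
  apply/forall_inP => g /digon_joins.
  by case/joinsP => -[-> ->]; rewrite !inE !eqxx ?orbT.
apply/forall_inP => g /digon_joins.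
by case/joinsP => -[-> ->]; rewrite // eq_sym.
Qed.

Lemma digon_spanning g : g \in [set p; q] -> spanning_tree D [set g].
Proof.
move=> gD; have jg := digon_joins gD.
have cvw : conn D [set g] v w by apply: conn_edge (set11 g) jg.
apply/and3P; split; first by rewrite sub1set.
  apply/forall_inP => x; rewrite !inE => /orP[]/eqP->; apply/forall_inP => y;
  rewrite !inE => /orP[]/eqP->; by [apply: connect0 | | rewrite connC].
apply: bridges_acyclic => h; rewrite inE => /eqP->.
  by rewrite /loopless; case/joinsP: jg => -[-> ->]; rewrite // eq_sym.
rewrite setDv; apply/negP => /conn_set0.
by case/joinsP: jg => -[-> ->] => /eqP; rewrite ?(negbTE v_w) // eq_sym (negbTE v_w).
Qed.

Lemma digon_bispanning : bispanning D.
Proof.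
apply/existsP; exists [set p]; apply/existsP; exists [set q].
by apply/and4P; split; rewrite ?digon_spanning ?disjoints1 ?inE ?eqxx ?orbT // eq_sym.
Qed.

End Digon.

(* With the third edge [r], the digon on [p] and [q] is a proper bispanning subgraph. *)
Lemma atomic_parallel (V E : finType) (G : mgraph V E) v w p q r :
  is_graph G -> atomic G -> p \in gE G -> q \in gE G -> r \in gE G ->
  r != p -> r != q -> p != q -> joins G p v w -> joins G q v w -> False.
Proof.
move=> graphG [_ atG] pG qG rG rp rq pq jp jq.
have v_w : v != w.
  have := graph_loopless graphG pG; rewrite /loopless.
  by case/joinsP: jp => -[-> ->]; rewrite // eq_sym.
have vwG : [set v; w] \subset gV G.
  have [sV tV] := graph_ends graphG pG.
  by apply/subsetP => x; rewrite !inE; case/joinsP: jp sV tV => -[-> ->] ? ? /orP[]/eqP->.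
have pqG : [set p; q] \subset gE G by apply/subsetP => x; rewrite !inE => /orP[]/eqP->.
case: (atG _ _ vwG pqG (digon_graph v_w jp jq) (digon_bispanning v_w jp jq pq)) => [[_ EE]|].
  by move: rG; rewrite -EE !inE (negbTE rp) (negbTE rq).
by rewrite cards2 (negbTE v_w).
Qed.

(** * The reduction *)

Section Reduction.
Variables (V E : finType) (G : mgraph V E) (v a b c : V) (ea eb ec eab : E).
Hypotheses (graphG : is_graph G) (atomicG : atomic G)
  (ea_G : ea \in gE G) (eb_G : eb \in gE G) (ec_G : ec \in gE G)
  (ja : joins G ea v a) (jb : joins G eb v b) (jc : joins G ec v c)
  (edges_at_v : [set g in gE G | incident G g v] = [set ea; eb; ec])
  (ea_eb : ea != eb) (ea_ec : ea != ec) (eb_ec : eb != ec)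
  (eab_G : eab \notin gE G) (eab_s : gs G eab = a) (eab_t : gt G eab = b).

Local Notation Gab := (reduction G v ea eb ec eab).
Local Notation subdiv S := ((S :\ eab) :|: [set ea; eb]).
Local Notation pend T := (T :|: [set ec]).
Local Notation triple S T :=
  (Dcut Gab S eab :&: Cyc G (pend T) ea :&: Cyc G (pend T) eb).
Implicit Types (F S T : {set E}) (g h : E).

Lemma mem_Gab g : (g \in gE Gab) = (g \notin [set ea; eb; ec]) && (g \in gE G) || (g == eab).
Proof. by rewrite /= !inE. Qed.

Lemma G_loopless g : g \in gE G -> loopless G g.
Proof. exact: graph_loopless. Qed.

Lemma G_ends g : g \in gE G -> gs G g \in gV G /\ gt G g \in gV G.
Proof. exact: graph_ends. Qed.

Lemma joins_eab : joins G eab a b.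
Proof. by rewrite /joins eab_s eab_t !eqxx. Qed.

Lemma ends_off_v g : ~~ incident G g v -> gs G g != v /\ gt G g != v.
Proof. by rewrite /incident negb_or => /andP. Qed.

Lemma neighbour_v g w : g \in gE G -> joins G g v w -> w != v /\ w \in gV G.
Proof.
move=> gG j; have := G_loopless gG; have [sV tV] := G_ends gG; rewrite /loopless.
by case/joinsP: j => -[es et]; rewrite es et in sV tV * => vw; split; rewrite // eq_sym.
Qed.

Lemma a_b : a != b.
Proof.
apply/eqP => ab; have jab : joins G ea v b by rewrite -ab.
by apply: (atomic_parallel graphG atomicG ea_G eb_G ec_G _ _ ea_eb jab jb); rewrite eq_sym.
Qed.

Lemma a_v : a != v. Proof. by case: (neighbour_v ea_G ja). Qed.
Lemma b_v : b != v. Proof. by case: (neighbour_v eb_G jb). Qed.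
Lemma c_v : c != v. Proof. by case: (neighbour_v ec_G jc). Qed.

Lemma Gab_off_v : {in gE Gab, forall g, ~~ incident G g v}.
Proof.
move=> g; rewrite mem_Gab => /orP[/andP[n3 gG]|/eqP->].
  by apply: contra n3 => i; rewrite -edges_at_v inE gG i.
by rewrite /incident eab_s eab_t negb_or a_v b_v.
Qed.

Lemma Gab_loopless : {in gE Gab, forall g, loopless G g}.
Proof.
move=> g; rewrite mem_Gab => /orP[/andP[_ /G_loopless //]|/eqP->].
by rewrite /loopless eab_s eab_t a_b.
Qed.

Lemma Gab_G g : g \in gE Gab -> g != eab -> g \in gE G.
Proof. by rewrite mem_Gab => /orP[/andP[_ ->]|/eqP->] //; rewrite eqxx. Qed.

Lemma Gab_vertex u : (u \in gV Gab) = (u != v) && (u \in gV G).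
Proof. by rewrite /= !inE. Qed.

Lemma a_Gab : a \in gV Gab.
Proof. by rewrite Gab_vertex a_v; case: (neighbour_v ea_G ja). Qed.

Lemma b_Gab : b \in gV Gab.
Proof. by rewrite Gab_vertex b_v; case: (neighbour_v eb_G jb). Qed.

Lemma c_Gab : c \in gV Gab.
Proof. by rewrite Gab_vertex c_v; case: (neighbour_v ec_G jc). Qed.

Lemma Gab_ends g : g \in gE Gab -> gs G g \in gV Gab /\ gt G g \in gV Gab.
Proof.
move=> gH; have [sv tv] := ends_off_v (Gab_off_v gH).
have [sV tV] : gs G g \in gV G /\ gt G g \in gV G.
  case: (eqVneq g eab) => [->|ne]; last exact: G_ends (Gab_G gH ne).
  by rewrite eab_s eab_t; split; [case: (neighbour_v ea_G ja) | case: (neighbour_v eb_G jb)].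
by rewrite !Gab_vertex sv tv sV tV.
Qed.

Lemma collapse_Gab w0 u : w0 \in gV Gab -> u \in gV G -> collapse v w0 u \in gV Gab.
Proof. by rewrite /collapse; case: (eqVneq u v) => [//|uv] _ uV; rewrite Gab_vertex uv. Qed.

Lemma notin_Gab g : g \in [set ea; eb; ec] -> g \notin gE Gab.
Proof.
move=> g3; rewrite mem_Gab g3 /=; apply: contraTN g3 => /eqP->.
by rewrite -edges_at_v inE (negbTE eab_G).
Qed.

Lemma ea_Gab : ea \notin gE Gab. Proof. by apply: notin_Gab; rewrite !inE eqxx. Qed.
Lemma eb_Gab : eb \notin gE Gab. Proof. by apply: notin_Gab; rewrite !inE eqxx orbT. Qed.
Lemma ec_Gab : ec \notin gE Gab. Proof. by apply: notin_Gab; rewrite !inE eqxx !orbT. Qed.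

Lemma Gab_neq g : g \in gE Gab -> [/\ g != ea, g != eb & g != ec].
Proof.
by move=> gH; split; apply: contraTneq gH => ->; rewrite ?ea_Gab ?eb_Gab ?ec_Gab.
Qed.

Lemma VtauP S T : Vtau Gab S T ->
  [/\ S \subset gE Gab, T \subset gE Gab,
      (forall u w, u \in gV Gab -> w \in gV Gab -> conn G S u w /\ conn G T u w),
      acyclic G S /\ acyclic G T &
      {in S, forall g, g \notin T} /\ (forall g, (g \in gE Gab) = (g \in S) || (g \in T))].
Proof.
case/and4P => /and3P[sS /forallP cS aS] /and3P[sT /forallP cT aT] dj /eqP U.
split => //.
  move=> u w uV wV; move: (cS u) (cT u); rewrite uV /= => /forallP/(_ w) + /forallP/(_ w).
  by rewrite wV.
by split; [move=> g gS; rewrite (disjointFr dj gS) | move=> g; rewrite -U inE].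
Qed.

Lemma subset_Gab_off_v F : F \subset gE Gab -> {in F, forall g, ~~ incident G g v}.
Proof. by move=> sF g /(subsetP sF)/Gab_off_v. Qed.

Lemma subset_Gab_loopless F : F \subset gE Gab -> {in F, forall g, loopless G g}.
Proof. by move=> sF g /(subsetP sF)/Gab_loopless. Qed.

Lemma off_v_setD1 F h : {in F, forall g, ~~ incident G g v} ->
  {in F :\ h, forall g, ~~ incident G g v}.
Proof. by move=> offF g; rewrite inE => /andP[_ /offF]. Qed.

Lemma subdivD1 S h : h != ea -> h != eb -> subdiv S :\ h = subdiv (S :\ h).
Proof.
move=> ha hb; apply/setP => g; rewrite !inE.
by case: (eqVneq g h) => [->|]; rewrite ?(negbTE ha) ?(negbTE hb) /= ?andbF // andbCA.
Qed.

Lemma subdivD1a S : ea \notin S -> subdiv S :\ ea = (S :\ eab) :|: [set eb].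
Proof.
move=> aS; apply/setP => g; rewrite !inE.
by case: (eqVneq g ea) => [->|] /=; rewrite ?(negbTE aS) ?andbF ?(negbTE ea_eb).
Qed.

Lemma subdivD1b S : eb \notin S -> subdiv S :\ eb = (S :\ eab) :|: [set ea].
Proof.
move=> bS; apply/setP => g; rewrite !inE.
by case: (eqVneq g eb) => [->|] /=; rewrite ?(negbTE bS) ?andbF ?orbF // eq_sym (negbTE ea_eb).
Qed.

Lemma pendD1 T h : h != ec -> pend T :\ h = pend (T :\ h).
Proof.
move=> hc; apply/setP => g; rewrite !inE.
by case: (eqVneq g h) => [->|]; rewrite ?(negbTE hc).
Qed.

Lemma pendD1c T : ec \notin T -> pend T :\ ec = T.
Proof.
move=> cT; apply/setP => g; rewrite !inE.
by case: (eqVneq g ec) => [->|]; rewrite ?(negbTE cT) ?orbF.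
Qed.

Lemma spanning_subdiv S : spanning_tree Gab S -> eab \in S -> spanning_tree G (subdiv S).
Proof.
case/and3P => sS /forallP cS acS eS.
have offS := subset_Gab_off_v sS; have lS := subset_Gab_loopless sS.
have aS : ea \notin S by apply: contra ea_Gab; apply: (subsetP sS).
have bS : eb \notin S by apply: contra eb_Gab; apply: (subsetP sS).
have nab : ~~ conn G (S :\ eab) a b.
  by have := acyclic_bridge acS eS (lS _ eS); rewrite eab_s eab_t.
apply/and3P; split.
- apply/subsetP => g; rewrite !inE => /orP[/andP[ge /(subsetP sS) gH]|/orP[]/eqP->] //.
  exact: Gab_G gH ge.
- apply/forallP => u; apply/implyP => uV; apply/forallP => w; apply/implyP => wV.
  rewrite (conn_subdivide u w offS eS joins_eab ja jb a_v b_v).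
  have := cS (collapse v a u); rewrite (collapse_Gab a_Gab uV) => /forallP/(_ (collapse v a w)).
  by rewrite (collapse_Gab a_Gab wV).
apply: bridges_acyclic => h; rewrite !inE.
  by case/orP=> [/andP[_ /lS //]|/orP[]/eqP->]; apply: G_loopless.
case/orP=> [/andP[he hS]|/orP[]/eqP->].
- have ha : h != ea by apply: contraNneq aS => <-.
  have hb : h != eb by apply: contraNneq bS => <-.
  have eSh : eab \in S :\ h by rewrite !inE eS andbT eq_sym.
  have [sv tv] := ends_off_v (offS _ hS).
  have offSh := off_v_setD1 (h:=h) offS.
  rewrite subdivD1 // (conn_subdivide_off offSh eSh joins_eab ja jb a_v b_v sv tv).
  exact: acyclic_bridge acS hS (lS _ hS).
- rewrite subdivD1a // (conn_pendant _ _ (off_v_setD1 (h:=eab) offS) jb b_v).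
  by case/joinsP: ja => -[-> ->]; rewrite collapse_v collapse_id ?a_v // connC.
rewrite subdivD1b // (conn_pendant _ _ (off_v_setD1 (h:=eab) offS) ja a_v).
by case/joinsP: jb => -[-> ->]; rewrite collapse_v collapse_id ?b_v // connC.
Qed.

Lemma spanning_pend T : spanning_tree Gab T -> eab \notin T -> spanning_tree G (pend T).
Proof.
case/and3P => sT /forallP cT acT eT.
have offT := subset_Gab_off_v sT; have lT := subset_Gab_loopless sT.
have ec_T : ec \notin T by apply: contra ec_Gab; apply: (subsetP sT).
apply/and3P; split.
- apply/subsetP => g; rewrite !inE => /orP[gT|/eqP->] //.
  by apply: Gab_G (subsetP sT _ gT) _; apply: contraNneq eT => <-.
- apply/forallP => u; apply/implyP => uV; apply/forallP => w; apply/implyP => wV.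
  rewrite (conn_pendant u w offT jc c_v).
  have := cT (collapse v c u); rewrite (collapse_Gab c_Gab uV) => /forallP/(_ (collapse v c w)).
  by rewrite (collapse_Gab c_Gab wV).
apply: bridges_acyclic => h; rewrite !inE.
  by case/orP=> [/lT //|/eqP->]; apply: G_loopless.
case/orP=> [hT|/eqP->].
- have hc : h != ec by apply: contraNneq ec_T => <-.
  have [sv tv] := ends_off_v (offT _ hT).
  rewrite pendD1 // (conn_pendant_off (off_v_setD1 (h:=h) offT) jc c_v sv tv).
  exact: acyclic_bridge acT hT (lT _ hT).
rewrite pendD1c //; apply/negP => cn.
have cvc : conn G T v c by case/joinsP: jc cn => -[-> ->] //; rewrite connC.
by move: c_v; rewrite (conn_off_v offT cvc) eqxx.
Qed.

Lemma Vtau_rho S T : Vtau Gab S T -> eab \in S -> Vtau G (subdiv S) (pend T).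
Proof.
move=> VST eS; have [sS sT _ _ [dj U]] := VtauP VST.
case/and4P: VST => trS trT _ _; have eT := dj _ eS.
have notST g : g \notin gE Gab -> g \notin S /\ g \notin T.
  by move=> gH; split; apply: contra gH; [apply: (subsetP sS) | apply: (subsetP sT)].
have [aS aT] := notST _ ea_Gab; have [bS bT] := notST _ eb_Gab; have [cS cT] := notST _ ec_Gab.
apply/and4P; split; [exact: spanning_subdiv | exact: spanning_pend | |].
  rewrite -setI_eq0; apply/eqP/setP => g; rewrite !inE; apply/negbTE.
  apply/negP => /andP[/orP[/andP[_ gS]|/orP[]/eqP->] /orP[gT|/eqP gc]].
  - by move: (dj _ gS); rewrite gT.
  - by move: cS; rewrite -gc gS.
  - by move: aT; rewrite gT.
  - by move: ea_ec; rewrite gc eqxx.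
  - by move: bT; rewrite gT.
  - by move: eb_ec; rewrite gc eqxx.
apply/eqP/setP => g; rewrite !inE; apply/idP/idP.
  case/orP => [/orP[/andP[ge gS]|/orP[]/eqP->]|/orP[gT|/eqP->]] //.
    exact: Gab_G (subsetP sS _ gS) ge.
  by apply: Gab_G (subsetP sT _ gT) _; apply: contraNneq eT => <-.
move=> gG; case: (eqVneq g ea) => [_|ga]; first by rewrite orbT.
case: (eqVneq g eb) => [_|gb]; first by rewrite !orbT.
case: (eqVneq g ec) => [_|gc]; first by rewrite !orbT.
have gH : g \in gE Gab by rewrite mem_Gab !inE gG (negbTE ga) (negbTE gb) (negbTE gc).
have ge : g != eab by apply: contraNneq eab_G => <-.
by move: gH; rewrite U ge /= orbF => /orP[] ->; rewrite ?orbT.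
Qed.

Lemma loopless_setU1 F q : {in F, forall h, loopless G h} -> loopless G q ->
  {in F :|: [set q], forall h, loopless G h}.
Proof. by move=> lF lq h; rewrite !inE => /orP[/lF //|/eqP->]. Qed.

Section Lift.
Variables (S T : {set E}).
Hypotheses (VST : Vtau Gab S T) (eab_S : eab \in S).

Lemma S_Gab : S \subset gE Gab. Proof. by case: (VtauP VST). Qed.
Lemma T_Gab : T \subset gE Gab. Proof. by case: (VtauP VST). Qed.
Lemma S_acyclic : acyclic G S. Proof. by case: (VtauP VST) => _ _ _ []. Qed.
Lemma T_acyclic : acyclic G T. Proof. by case: (VtauP VST) => _ _ _ []. Qed.
Lemma S_notin_T : {in S, forall g, g \notin T}. Proof. by case: (VtauP VST) => _ _ _ _ []. Qed.
Lemma eab_T : eab \notin T. Proof. exact: S_notin_T. Qed.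

Lemma S_conn u w : u \in gV Gab -> w \in gV Gab -> conn G S u w.
Proof. by case: (VtauP VST) => _ _ cST _ _ uV wV; case: (cST _ _ uV wV). Qed.

Lemma T_conn u w : u \in gV Gab -> w \in gV Gab -> conn G T u w.
Proof. by case: (VtauP VST) => _ _ cST _ _ uV wV; case: (cST _ _ uV wV). Qed.

Lemma S_off_v : {in S, forall g, ~~ incident G g v}. Proof. exact: subset_Gab_off_v S_Gab. Qed.
Lemma T_off_v : {in T, forall g, ~~ incident G g v}. Proof. exact: subset_Gab_off_v T_Gab. Qed.
Lemma S_loopless : {in S, forall g, loopless G g}. Proof. exact: subset_Gab_loopless S_Gab. Qed.
Lemma T_loopless : {in T, forall g, loopless G g}. Proof. exact: subset_Gab_loopless T_Gab. Qed.

Lemma notin_Gab_ST g : g \notin gE Gab -> g \notin S /\ g \notin T.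
Proof. by move=> gH; split; apply: contra gH; apply/subsetP; [apply: S_Gab | apply: T_Gab]. Qed.

Lemma subdiv_acyclic : acyclic G (subdiv S).
Proof. by case/and4P: (Vtau_rho VST eab_S) => /and3P[]. Qed.

Lemma pend_acyclic : acyclic G (pend T).
Proof. by case/and4P: (Vtau_rho VST eab_S) => _ /and3P[]. Qed.

Lemma subdiv_loopless : {in subdiv S, forall g, loopless G g}.
Proof.
move=> h; rewrite !inE => /orP[/andP[_ /S_loopless //]|/orP[]/eqP->]; exact: G_loopless.
Qed.

Lemma pend_loopless : {in pend T, forall g, loopless G g}.
Proof. exact: loopless_setU1 T_loopless (G_loopless ec_G). Qed.

Lemma Cyc_pend e g : e \in gE Gab -> e \notin T -> e != eab ->
  (g \in Cyc G (pend T) e) = (g \in Cyc G T e).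
Proof.
move=> eH eT ee; have [_ cT] := notin_Gab_ST ec_Gab; have [_ _ e_ec] := Gab_neq eH.
have eTc : e \notin pend T by rewrite !inE negb_or eT.
have [sv tv] := ends_off_v (Gab_off_v eH).
have le := Gab_loopless eH.
rewrite (mem_Cyc pend_acyclic eTc (loopless_setU1 pend_loopless le)).
rewrite (mem_Cyc T_acyclic eT (loopless_setU1 T_loopless le)).
rewrite (conn_pendant_off T_off_v jc c_v sv tv).
case: (eqVneq g ec) => [->|gc].
  by rewrite pendD1c // !inE eqxx orbT (negbTE cT) eq_sym (negbTE e_ec) /= andbN.
rewrite pendD1 // (conn_pendant_off (off_v_setD1 (h:=g) T_off_v) jc c_v sv tv).
by rewrite !inE (negbTE gc) orbF.
Qed.

Lemma S_exchange_rho e : e \in S -> e != eab ->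
  Dcut G (subdiv S) e :&: Cyc G (pend T) e = Dcut Gab S e :&: Cyc G T e.
Proof.
move=> eS ee; have eH := subsetP S_Gab _ eS; have [e_ea e_eb _] := Gab_neq eH.
apply/setP => g; rewrite !in_setI (Cyc_pend g eH (S_notin_T eS) ee).
case gC: (g \in Cyc G T e); rewrite ?andbF ?andbT //.
have gTe := Cyc_sub gC.
have gne : g != eab by apply: contraTneq gTe => ->; rewrite !inE negb_or eab_T eq_sym.
have gH : g \in gE Gab.
  by move: gTe; rewrite in_setU in_set1 => /orP[/(subsetP T_Gab) //|/eqP->].
have [sv tv] := ends_off_v (Gab_off_v eH); have [sv' tv'] := ends_off_v (Gab_off_v gH).
have eSe : eab \in S :\ e by rewrite !inE eab_S andbT eq_sym.
have offSe := off_v_setD1 (h:=e) S_off_v.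
rewrite !mem_Dcut (Gab_G gH gne) gH subdivD1 //.
by rewrite !(conn_subdivide_off offSe eSe joins_eab ja jb a_v b_v) //.
Qed.

Section TEdge.
Variable e : E.
Hypotheses (e_T : e \in T) (e_eab : e != eab).

Lemma e_Gab : e \in gE Gab. Proof. exact: subsetP T_Gab _ e_T. Qed.

Lemma e_notin_S : e \notin S.
Proof. by apply/negP => /S_notin_T; rewrite e_T. Qed.

Lemma e_notin_subdiv : e \notin subdiv S.
Proof.
have [e_ea e_eb _] := Gab_neq e_Gab.
by rewrite !inE negb_or negb_and e_notin_S orbT negb_or e_ea e_eb.
Qed.

Lemma e_ends_off_v : gs G e != v /\ gt G e != v.
Proof. exact: ends_off_v (Gab_off_v e_Gab). Qed.

Lemma S_conn_e : conn G S (gs G e) (gt G e).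
Proof. by have [sV tV] := Gab_ends e_Gab; apply: S_conn. Qed.

Lemma subdiv_conn_e : conn G (subdiv S) (gs G e) (gt G e).
Proof.
have [sv tv] := e_ends_off_v.
by rewrite (conn_subdivide_off S_off_v eab_S joins_eab ja jb a_v b_v sv tv) S_conn_e.
Qed.

Let e_loopless := Gab_loopless e_Gab.

Lemma mem_Cyc_S g :
  (g \in Cyc G S e) = [&& g \in S :|: [set e], conn G S (gs G e) (gt G e) &
     (g != e) ==> ~~ conn G (S :\ g) (gs G e) (gt G e)].
Proof. by rewrite (mem_Cyc S_acyclic e_notin_S (loopless_setU1 S_loopless e_loopless)). Qed.

Lemma mem_Cyc_subdiv g :
  (g \in Cyc G (subdiv S) e) = [&& g \in subdiv S :|: [set e], conn G S (gs G e) (gt G e) &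
     (g != e) ==> ~~ conn G (subdiv S :\ g) (gs G e) (gt G e)].
Proof.
have lSe := loopless_setU1 subdiv_loopless e_loopless.
by rewrite (mem_Cyc subdiv_acyclic e_notin_subdiv lSe) subdiv_conn_e S_conn_e.
Qed.

Lemma Cyc_subdiv g : g != ea -> g != eb -> g != eab ->
  (g \in Cyc G (subdiv S) e) = (g \in Cyc G S e).
Proof.
move=> ga gb gab; have [sv tv] := e_ends_off_v.
rewrite mem_Cyc_subdiv mem_Cyc_S.
have -> : (g \in subdiv S :|: [set e]) = (g \in S :|: [set e]).
  by rewrite !inE gab (negbTE ga) (negbTE gb) /= orbF.
case: (eqVneq g e) => [->|ge] //; case gS: (g \in S); last by rewrite !inE gS (negbTE ge).
have eSg : eab \in S :\ g by rewrite !inE eab_S andbT eq_sym.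
rewrite subdivD1 //.
by rewrite (conn_subdivide_off (off_v_setD1 (h:=g) S_off_v) eSg joins_eab ja jb a_v b_v sv tv).
Qed.

Lemma Cyc_subdiv_ea : (ea \in Cyc G (subdiv S) e) = (eab \in Cyc G S e).
Proof.
have [e_ea _ _] := Gab_neq e_Gab; have [aS _] := notin_Gab_ST ea_Gab.
have [sv tv] := e_ends_off_v.
rewrite mem_Cyc_subdiv mem_Cyc_S.
rewrite !inE eqxx eab_S /= orbT ![_ == e]eq_sym (negbTE e_ea) (negbTE e_eab) /=.
by rewrite subdivD1a // (conn_pendant_off (off_v_setD1 (h:=eab) S_off_v) jb b_v sv tv).
Qed.

Lemma Cyc_subdiv_eb : (eb \in Cyc G (subdiv S) e) = (eab \in Cyc G S e).
Proof.
have [_ e_eb _] := Gab_neq e_Gab; have [bS _] := notin_Gab_ST eb_Gab.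
have [sv tv] := e_ends_off_v.
rewrite mem_Cyc_subdiv mem_Cyc_S.
rewrite !inE eqxx eab_S /= !orbT ![_ == e]eq_sym (negbTE e_eb) (negbTE e_eab) /=.
by rewrite subdivD1b // (conn_pendant_off (off_v_setD1 (h:=eab) S_off_v) ja a_v sv tv).
Qed.

Local Notation side x := (conn G (T :\ e) (gs G e) x).

Lemma T_conn_e x : x \in gV Gab -> conn G T (gs G e) x.
Proof. by have [sV _] := Gab_ends e_Gab; apply: T_conn. Qed.

Lemma pendD1e_conn x y :
  conn G (pend T :\ e) x y = conn G (T :\ e) (collapse v c x) (collapse v c y).
Proof.
have [_ _ e_ec] := Gab_neq e_Gab.
by rewrite pendD1 // (conn_pendant x y (off_v_setD1 (h:=e) T_off_v) jc c_v).
Qed.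

Lemma Dcut_pend_at_v ew w : ew \in gE G -> joins G ew v w -> w \in gV Gab ->
  (ew \in Dcut G (pend T) e) = (side c != side w).
Proof.
move=> ewG jw wV; have [sv tv] := e_ends_off_v.
have wv : w != v by move: wV; rewrite Gab_vertex => /andP[].
rewrite mem_Dcut ewG /= !pendD1e_conn !(collapse_id c sv) !(collapse_id c tv).
have split := side_split T_acyclic e_T e_loopless (T_conn_e c_Gab) (T_conn_e wV).
by case/joinsP: jw => -[-> ->]; rewrite collapse_v collapse_id // ?split // orbC split.
Qed.

Lemma Cyc_pend_at_v ew w : ew \in gE G -> ew \notin gE Gab -> ew != ec -> joins G ew v w ->
  w \in gV Gab -> (e \in Cyc G (pend T) ew) = (side c != side w).
Proof.
move=> ewG ewH ewc jw wV; have wv : w != v by move: wV; rewrite Gab_vertex => /andP[].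
have [_ ewT] := notin_Gab_ST ewH.
have ewTc : ew \notin pend T by rewrite !inE negb_or ewT.
have e_ew : e != ew by apply: contraNneq ewH => <-; apply: e_Gab.
rewrite (mem_Cyc pend_acyclic ewTc (loopless_setU1 pend_loopless (G_loopless ewG))).
rewrite !inE e_T e_ew /= pendD1e_conn (conn_pendant _ _ T_off_v jc c_v).
have cw := conn_setD1_side e_T (T_conn_e c_Gab) (T_conn_e wV).
case/joinsP: jw => -[-> ->]; rewrite collapse_v collapse_id //.
  by rewrite cw T_conn ?c_Gab.
by rewrite (@connC _ _ G T) (@connC _ _ G (T :\ e)) cw T_conn ?c_Gab.
Qed.

Lemma Dcut_eab : (eab \in Dcut Gab T e) = (side a != side b).
Proof.
have eabH : eab \in gE Gab by rewrite mem_Gab eqxx orbT.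
rewrite mem_Dcut eabH /= eab_s eab_t.
exact: (side_split T_acyclic e_T e_loopless (T_conn_e a_Gab) (T_conn_e b_Gab)).
Qed.

Lemma mem_triple :
  (e \in triple S T) =
  [&& eab \in Cyc G S e, side c != side a & side c != side b].
Proof.
rewrite !in_setI (Cyc_pend_at_v ea_G ea_Gab ea_ec ja a_Gab).
rewrite (Cyc_pend_at_v eb_G eb_Gab eb_ec jb b_Gab) -andbA; congr (_ && _).
have [sV tV] := Gab_ends e_Gab.
have cS x : x \in gV Gab -> conn Gab S (gs Gab eab) x by rewrite /= eab_s; apply: S_conn a_Gab.
have lSe := loopless_setU1 S_loopless e_loopless.
exact: (@Dcut_Cyc _ _ Gab _ _ _ S_acyclic eab_S e_notin_S e_Gab lSe (cS _ sV) (cS _ tV)).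
Qed.

Lemma T_exchange_rho_off g : g != ea -> g != eb -> g != eab ->
  (g \in Dcut G (pend T) e :&: Cyc G (subdiv S) e) = (g \in Dcut Gab T e :&: Cyc G S e).
Proof.
move=> ga gb gab; rewrite !in_setI (Cyc_subdiv ga gb gab).
case gC: (g \in Cyc G S e); rewrite ?andbF ?andbT //.
have gH : g \in gE Gab.
  move: (Cyc_sub gC); rewrite in_setU in_set1 => /orP[/(subsetP S_Gab) //|/eqP->].
  exact: e_Gab.
have [sv tv] := e_ends_off_v; have [sv' tv'] := ends_off_v (Gab_off_v gH).
by rewrite !mem_Dcut (Gab_G gH gab) gH !pendD1e_conn !collapse_id.
Qed.

(* Off [ea], [eb], [eab] the two intersections agree; [eab] drops out, while [ea]
   (resp. [eb]) enters iff [eab] is on the cycle and [T :\ e] separates [c] from [a]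
   (resp. [b]).  Comparing the three sides of [a], [b], [c] gives the triple
   condition. *)
Lemma T_exchange_rho f : f \in S -> f != eab ->
  (Dcut G (pend T) e :&: Cyc G (subdiv S) e == [set e; f]) =
  (Dcut Gab T e :&: Cyc G S e == [set e; f]) && (e \notin triple S T).
Proof.
move=> fS fe; have [e_ea e_eb _] := Gab_neq e_Gab.
have [f_ea f_eb _] := Gab_neq (subsetP S_Gab _ fS).
have a_ef : ea \notin [set e; f] by rewrite !inE negb_or ![ea == _]eq_sym e_ea f_ea.
have b_ef : eb \notin [set e; f] by rewrite !inE negb_or ![eb == _]eq_sym e_eb f_eb.
have ab_ef : eab \notin [set e; f] by rewrite !inE negb_or ![eab == _]eq_sym e_eab fe.
rewrite !(eq_set_except3 _ a_ef b_ef ab_ef).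
have -> : [forall g, (g != ea) && (g != eb) && (g != eab) ==>
            ((g \in Dcut G (pend T) e :&: Cyc G (subdiv S) e) == (g \in [set e; f]))] =
          [forall g, (g != ea) && (g != eb) && (g != eab) ==>
            ((g \in Dcut Gab T e :&: Cyc G S e) == (g \in [set e; f]))].
  apply: eq_forallb => g.
  by case: (boolP (_ && _)) => //= /andP[/andP[ga gb] gab]; rewrite T_exchange_rho_off.
rewrite mem_triple !in_setI (Dcut_pend_at_v ea_G ja a_Gab) (Dcut_pend_at_v eb_G jb b_Gab).
rewrite Cyc_subdiv_ea Cyc_subdiv_eb Dcut_eab !mem_Dcut.
rewrite (negbTE eab_G) (negbTE ea_Gab) (negbTE eb_Gab).
by case: [forall g, _]; case: (eab \in Cyc G S e); case: (side a); case: (side b);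
  case: (side c).
Qed.

End TEdge.

Lemma triple_T e : e \in gE Gab -> e \in triple S T -> e \in T.
Proof.
move=> eH; rewrite !in_setI => /andP[/andP[_ /Cyc_sub]]; rewrite !inE.
case/orP=> [/orP[//|/eqP ec']|/eqP ea'] _.
  by move: eH; rewrite ec' (negbTE ec_Gab).
by move: eH; rewrite ea' (negbTE ea_Gab).
Qed.

Lemma arc_rho_S e f : e \in gE Gab -> f \in gE Gab -> e != eab -> f != eab ->
  arc G e f (subdiv S) (pend T) = arc Gab e f S T && (e \notin triple S T).
Proof.
move=> eH fH ee fe.
have subdivE g : g \in gE Gab -> g != eab -> (g \in subdiv S) = (g \in S).
  move=> gH ge; have [ga gb _] := Gab_neq gH.
  by rewrite !inE ge (negbTE ga) (negbTE gb) /= orbF.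
have pendE g : g \in gE Gab -> (g \in pend T) = (g \in T).
  by move=> gH; have [_ _ gc] := Gab_neq gH; rewrite !inE (negbTE gc) orbF.
rewrite /arc (Vtau_rho VST eab_S) VST /uniqS_exch /uniqT_exch.
rewrite (subdivE _ eH ee) (subdivE _ fH fe) !pendE //.
case eS: (e \in S) => /=.
  have eT : e \in T = false by apply/negbTE/S_notin_T.
  rewrite eT /= !orbF (contraFN (triple_T eH) eT) andbT.
  by case: (f \in T) => //=; rewrite S_exchange_rho.
case eT: (e \in T) => //=; case fS: (f \in S) => //=.
by rewrite T_exchange_rho.
Qed.

End Lift.

Lemma arc_Gab e f S T : arc Gab e f S T -> e \in gE Gab /\ f \in gE Gab.
Proof.
case/andP=> /VtauP[sS sT _ _ _] /orP[] /and3P[eX fY _].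
  by split; [apply: (subsetP sS) | apply: (subsetP sT)].
by split; [apply: (subsetP sT) | apply: (subsetP sS)].
Qed.

Lemma arc_rho S T e f : Vtau Gab S T ->
  e \in gE Gab -> f \in gE Gab -> e != eab -> f != eab ->
  arcP G e f (rho eab ea eb ec S T) =
  arc Gab e f S T && (if eab \in S then e \notin triple S T else e \notin triple T S).
Proof.
move=> VST eH fH ee fe; rewrite /arcP /rho.
case eS: (eab \in S) => /=; first exact: arc_rho_S.
have [_ _ _ _ [_ U]] := VtauP VST.
have eT : eab \in T by move: (U eab); rewrite mem_Gab eqxx orbT eS => /esym.
have VTS : Vtau Gab T S by rewrite VtauC.
by rewrite arcC (arc_rho_S VTS eT eH fH ee fe) arcC.
Qed.

Lemma reduction_arcs :
  (forall e f S T, e != eab -> f != eab -> arc Gab e f S T ->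
     (eab \in S /\ e \notin triple S T) \/ (eab \in T /\ e \notin triple T S) ->
     arcP G e f (rho eab ea eb ec S T)) /\
  (forall S T, Vtau Gab S T ->
   forall e f, e \in gE Gab -> f \in gE Gab -> e != eab -> f != eab ->
     ~~ arc Gab e f S T \/ (arc Gab e f S T /\
        ~ (eab \in S /\ e \notin triple S T) /\ ~ (eab \in T /\ e \notin triple T S)) ->
     ~~ arcP G e f (rho eab ea eb ec S T)).
Proof.
split=> [e f S T ee fe A cond | S T VST e f eH fH ee fe cond].
  have [eH fH] := arc_Gab A; have VST : Vtau Gab S T by case/andP: A.
  rewrite (arc_rho VST eH fH ee fe) A /=.
  case: cond => -[eX nt]; first by rewrite eX.
  have eS : eab \notin S by apply: contraL eX => /(S_notin_T VST).
  by rewrite (negbTE eS).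
rewrite (arc_rho VST eH fH ee fe); case: cond => [/negbTE-> //|[-> [n1 n2]]] /=.
case eS: (eab \in S).
  by apply/negP => nt; apply: n1.
have [_ _ _ _ [_ U]] := VtauP VST.
have eT : eab \in T by move: (U eab); rewrite mem_Gab eqxx orbT eS => /esym.
by apply/negP => nt; apply: n2.
Qed.

End Reduction.

Lemma card3_neq (T : finType) (x y z : T) :
  #|[set x; y; z]| = 3 -> [/\ x != y, x != z & y != z].
Proof.
rewrite -setUA cardsU1 cards2 !inE.
by case: (x == y); case: (x == z); case: (y == z).
Qed.

Theorem mainTheorem14 (V E : finType) (G : mgraph V E)
    (v x y z : V) (ex ey ez : E) (a b c : V) (ea eb ec eab : E) :
  is_graph G -> atomic G ->
  v \in gV G ->
  ex \in gE G -> ey \in gE G -> ez \in gE G ->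
  joins G ex v x -> joins G ey v y -> joins G ez v z ->
  #|[set ex; ey; ez]| = 3 ->
  [set g in gE G | incident G g v] = [set ex; ey; ez] ->
  (([/\ a = x, b = y & c = z] /\ [/\ ea = ex, eb = ey & ec = ez]) \/
   ([/\ a = x, b = z & c = y] /\ [/\ ea = ex, eb = ez & ec = ey]) \/
   ([/\ a = y, b = z & c = x] /\ [/\ ea = ey, eb = ez & ec = ex])) ->
  eab \notin gE G -> gs G eab = a -> gt G eab = b ->
  let Gab := reduction G v ex ey ez eab in
  let cond1 (S T : {set E}) (e : E) :=
    eab \in S /\
    e \notin Dcut Gab S eab :&: Cyc G (T :|: [set ec]) ea
                            :&: Cyc G (T :|: [set ec]) eb in
  let cond2 (S T : {set E}) (e : E) :=
    eab \in T /\
    e \notin Dcut Gab T eab :&: Cyc G (S :|: [set ec]) ea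
                            :&: Cyc G (S :|: [set ec]) eb in
  (forall (e f : E) (S T : {set E}),
      e != eab -> f != eab -> arc Gab e f S T ->
      cond1 S T e \/ cond2 S T e ->
      arcP G e f (rho eab ea eb ec S T))
  /\
  (forall (S T : {set E}), Vtau Gab S T ->
   forall e f : E, e \in gE Gab -> f \in gE Gab -> e != eab -> f != eab ->
      (~~ arc Gab e f S T \/
       (arc Gab e f S T /\ ~ cond1 S T e /\ ~ cond2 S T e)) ->
      ~~ arcP G e f (rho eab ea eb ec S T)).
Proof.
move=> graphG atG _ ex_G ey_G ez_G jx jy jz card_xyz at_v cases eab_G.
have [xy xz yz] := card3_neq card_xyz.
have [yx zx zy] : [/\ ey != ex, ez != ex & ez != ey] by split; rewrite eq_sym.
have xzy : [set ex; ez; ey] = [set ex; ey; ez].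
  by apply/setP => g; rewrite !inE; case: (g == ex); case: (g == ey); case: (g == ez).
have yzx : [set ey; ez; ex] = [set ex; ey; ez].
  by apply/setP => g; rewrite !inE; case: (g == ex); case: (g == ey); case: (g == ez).
case: cases => [[[-> -> _] [-> -> ->]]|[[[-> -> _] [-> -> ->]]|[[-> -> _] [-> -> ->]]]]
  => eab_s eab_t.
- exact: (reduction_arcs graphG atG ex_G ey_G ez_G jx jy jz at_v xy xz yz
          eab_G eab_s eab_t).
- rewrite /reduction -xzy.
  exact: (reduction_arcs graphG atG ex_G ez_G ey_G jx jz jy (etrans at_v (esym xzy)) xz xy zy
          eab_G eab_s eab_t).
- rewrite /reduction -yzx.
  exact: (reduction_arcs graphG atG ey_G ez_G ex_G jy jz jx (etrans at_v (esym yzx)) yz yx zx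
          eab_G eab_s eab_t).
Qed.
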